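(* Let $\mathbf{x}=(x_1,\dots,x_n)$, and let $u(\mathbf{x},g(\mathbf{x}))$ be a multivariate constrained expression built by recursively substituting univariate constrained expressions ${}^{k}u(\mathbf{x},g)=g+\sum_j {}^{k}\phi_j(x_k)\,{}^{k}\rho_j(\mathbf{x},g)$, $k=1,\dots,n$, into one another (each used once, the innermost using the free function $g$). Then for a given function $f:\mathbb{R}^n\to\mathbb{R}$ satisfying the constraints, the free function $g$ with $u(\mathbf{x},g(\mathbf{x}))=f(\mathbf{x})$ is not unique. In other words, multivariate constrained expressions are not injective functionals from the set of all free functions to the set of all functions satisfying the constraints.
   Context: For each $k$ there are linear constraints ${}^{k}\mathcal{C}_j[u]={}^{k}\kappa_j$, $j=1,\dots,\ell_k$ (with at least one constraint in total), where ${}^{k}\mathcal{C}_j$ is a linear operator associated with the $k$-th independent variable returning the operand function evaluated in the way the dependent variable appears in that constraint, and ${}^{k}\kappa_j$ does not depend on $x_k$. The projection functionals are ${}^{k}\rho_j(\mathbf{x},g)={}^{k}\kappa_j-{}^{k}\mathcal{C}_j[g]$, and the switching functions are ${}^{k}\phi_j(x_k)=\sum_m {}^{k}s_m(x_k)\alpha^{(k)}_{mj}$, where ${}^{k}s_m$ are support functions of $x_k$ and $\alpha^{(k)}$ is the inverse of the support matrix $\mathbb{S}^{(k)}_{im}={}^{k}\mathcal{C}_i[{}^{k}s_m]$, so that ${}^{k}\mathcal{C}_i[{}^{k}\phi_j]=\delta_{ij}$. A free function is any $g:\mathbb{R}^n\to\mathbb{R}$ for which all constraint operators (and compositions with at most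 one operator per variable) appearing in the construction are defined. *)

From mathcomp Require Import all_boot all_algebra.
From mathcomp Require Import reals.
Set Implicit Arguments.
Unset Strict Implicit.
Unset Printing Implicit Defensive.
Import GRing.Theory Num.Theory.
Local Open Scope ring_scope.

Section TFC.
Variable R : realType.
Variable n : nat.

Definition point := 'I_n -> R.

Definition upd (x : point) (k : 'I_n) (t : R) : point :=
  fun i => if i == k then t else x i.

Definition slice (g : point -> R) (x : point) (k : 'I_n) : R -> R :=
  fun t => g (upd x k t).

Definition fsubspace (D : (R -> R) -> Prop) : Prop :=
  D (fun _ => 0) /\
  forall (a : R) u v, D u -> D v -> D (fun t => a * u t + v t).

Definition linear_on (D : (R -> R) -> Prop) (L : (R -> R) -> R) : Prop :=
  forall (a : R) u v, D u -> D v -> L (fun t => a * u t + v t) = a * L u + L v.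

(* For the k-th variable there are ell k constraints.
   The constraint operator kC_j acts on u : R^n -> R by applying the linear
   functional Lf k j (defined on the subspace Dom k j) to the slice of u in
   the variable x_k:  kC_j[u](x) = Lf k j (t |-> u(x[x_k := t])).
   (This is "the operand function evaluated in the way the dependent variable
   appears in the constraint", e.g. u(x_k=p), d/dx_k u(x_k=p), int u dx_k.) *)
Variable ell : 'I_n -> nat.
Variable Lf : forall k : 'I_n, 'I_(ell k) -> (R -> R) -> R.
Variable s : forall k : 'I_n, 'I_(ell k) -> R -> R.
Variable kappa : forall k : 'I_n, 'I_(ell k) -> point -> R.

Definition Cop (k : 'I_n) (j : 'I_(ell k)) (g : point -> R) : point -> R :=
  fun x => @Lf k j (slice g x k).

Definition support_matrix (k : 'I_n) : 'M[R]_(ell k) :=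
  \matrix_(i, m) @Lf k i (@s k m).

Definition phi (k : 'I_n) (j : 'I_(ell k)) (t : R) : R :=
  \sum_m @s k m t * invmx (support_matrix k) m j.

Definition rho (k : 'I_n) (j : 'I_(ell k)) (g : point -> R) (x : point) : R :=
  @kappa k j x - @Cop k j g x.

Definition uk (k : 'I_n) (g : point -> R) : point -> R :=
  fun x => g x + \sum_j @phi k j (x k) * @rho k j g x.

Definition ucon (ord : seq 'I_n) (g : point -> R) : point -> R :=
  foldr (fun k acc => uk k acc) g ord.

Definition in_domains (Dom : forall k : 'I_n, 'I_(ell k) -> (R -> R) -> Prop)
  (g : point -> R) : Prop :=
  forall k j x, Dom k j (slice g x k).

Fixpoint free_fun (Dom : forall k : 'I_n, 'I_(ell k) -> (R -> R) -> Prop)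
  (ord : seq 'I_n) (g : point -> R) : Prop :=
  match ord with
  | [::] => in_domains Dom g
  | k :: o => in_domains Dom (ucon (k :: o) g) /\ free_fun Dom o g
  end.

Definition satisfies_constraints (f : point -> R) : Prop :=
  forall k j x, @Cop k j f x = @kappa k j x.

End TFC.

From mathcomp Require Import all_boot all_algebra.
From mathcomp Require Import reals.
From Stdlib Require Import Classical FunctionalExtensionality.
Import GRing.Theory Num.Theory.
Local Open Scope ring_scope.

(* If f satisfies the constraints, every projection functional vanishes on f,
   so each univariate constrained expression, hence u, fixes f.  Perturb f by
   the tensor product h(x) = prod_k psi_k(x_k), where psi_k is one support
   function of the k-th variable (or 1 if x_k is unconstrained).  Every
   x_k-slice of h is a multiple of a support function, which the k-th
   univariate expression removes completely; so the innermost layer carrying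
   a constraint maps f + h to f, and the outer layers fix f.  Finally h <> 0,
   because invertibility of the support matrices forbids a support function
   from vanishing identically. *)

Lemma linear_on_zero {R : realType} {D : (R -> R) -> Prop} {L : (R -> R) -> R} :
  fsubspace D -> linear_on D L -> L (fun _ => 0) = 0.
Proof.
move=> [D0 _] linL; have /= := linL 1 _ _ D0 D0.
have -> : (fun _ : R => 1 * 0 + 0 : R) = (fun _ => 0).
  by apply: functional_extensionality => t; rewrite mulr0 addr0.
by rewrite mul1r -{1}[L _]addr0 => /addrI <-.
Qed.

Lemma upd_id {R : realType} {n : nat} (x : point R n) (k : 'I_n) :
  upd x k (x k) = x.
Proof. by apply: functional_extensionality => i; rewrite /upd; case: eqP => [->|]. Qed.

Definition tensor {R : realType} {n : nat} (p : 'I_n -> R -> R) : point R n -> R :=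
  fun x => \prod_i p i (x i).

Lemma tensor_upd {R : realType} {n : nat} (p : 'I_n -> R -> R) x k t :
  tensor p (upd x k t) = p k t * \prod_(i | i != k) p i (x i).
Proof.
rewrite /tensor (bigD1 k) //= /upd eqxx; congr (_ * _).
by apply: eq_bigr => i /negbTE ->.
Qed.

Lemma tensor_neq0 {R : realType} {n : nat} {p : 'I_n -> R -> R} :
  (forall i, exists t, p i t != 0) -> exists x, tensor p x != 0.
Proof.
move=> p_neq0; exists (fun i => xchoose (p_neq0 i)).
by apply/prodf_neq0 => i _; exact: (xchooseP (p_neq0 i)).
Qed.

Definition psi {R : realType} {n : nat} {ell : 'I_n -> nat}
  (s : forall k : 'I_n, 'I_(ell k) -> R -> R) (k : 'I_n) : R -> R :=
  match ell k as e return ('I_e -> R -> R) -> R -> R with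
  | 0 => fun _ _ => 1
  | e.+1 => fun s_k => s_k ord0
  end (s k).

Section ConstrainedExpression.
Context {R : realType} {n : nat} {ell : 'I_n -> nat}.
Context {Lf : forall k : 'I_n, 'I_(ell k) -> (R -> R) -> R}.
Context {Dom : forall k : 'I_n, 'I_(ell k) -> (R -> R) -> Prop}.
Context {s : forall k : 'I_n, 'I_(ell k) -> R -> R}.
Context {kappa : forall k : 'I_n, 'I_(ell k) -> point R n -> R}.
Hypothesis Dom_subspace : forall k j, fsubspace (Dom k j).
Hypothesis Lf_linear : forall k j, linear_on (Dom k j) (Lf k j).
Hypothesis s_Dom : forall k j m, Dom k j (s k m).
Hypothesis support_unit : forall k, support_matrix Lf s k \in unitmx.

Lemma invmx_support_Lf k (m m' : 'I_(ell k)) :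
  \sum_j invmx (support_matrix Lf s k) m j * Lf k j (s k m') = (m == m')%:R.
Proof.
have := congr1 (fun M : 'M[R]_(ell k) => M m m') (mulVmx (support_unit k)).
by rewrite /= !mxE => <-; apply: eq_bigr => j _; rewrite mxE.
Qed.

Lemma sum_phi_Lf_s k m t : \sum_j phi Lf s j t * Lf k j (s k m) = s k m t.
Proof.
rewrite (eq_bigr (fun j => \sum_m' s k m' t *
           (invmx (support_matrix Lf s k) m' j * Lf k j (s k m)))); last first.
  by move=> j _; rewrite /phi mulr_suml; apply: eq_bigr => m' _; rewrite mulrA.
rewrite exchange_big /=; under eq_bigr => m' _ do rewrite -mulr_sumr invmx_support_Lf.
by rewrite (bigD1 m) //= eqxx mulr1 big1 ?addr0 // => m' /negbTE ->; rewrite mulr0.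
Qed.

Lemma support_neq0 k m : exists t, s k m t != 0.
Proof.
apply: NNPP => s_eq0.
have s0 : s k m = (fun _ => 0).
  apply: functional_extensionality => t; apply/eqP; apply: contraT => st.
  by case: s_eq0; exists t.
have := invmx_support_Lf k m m; rewrite eqxx big1 => [|j _]; last first.
  by rewrite s0 (linear_on_zero (Dom_subspace k j) (Lf_linear k j)) mulr0.
by move/eqP; rewrite eq_sym oner_eq0.
Qed.

Lemma uk_id k g :
  (forall j x, Cop Lf j g x = kappa k j x) -> uk Lf s kappa k g = g.
Proof.
move=> gC; apply: functional_extensionality => x.
by rewrite /uk big1 ?addr0 // => j _; rewrite /rho gC subrr mulr0.
Qed.

Lemma ucon_constrained f ord :
  satisfies_constraints Lf kappa f -> ucon Lf s kappa ord f = f.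
Proof. by move=> fC; elim: ord => [|k ord IH] //=; rewrite IH uk_id. Qed.

Lemma free_fun_of_ucon g ord :
  (forall o, in_domains Dom (ucon Lf s kappa o g)) -> free_fun Lf s kappa Dom ord g.
Proof.
move=> gD; elim: ord => [|k ord IH]; first exact: (gD [::]).
by split; [exact: gD | exact: IH].
Qed.

Section AddSupport.
Variables (k : 'I_n) (m : 'I_(ell k)) (f h : point R n -> R) (c : point R n -> R).
Hypothesis h_slice : forall x t, h (upd x k t) = c x * s k m t.

Lemma slice_add_support x :
  slice (fun y => f y + h y) x k = (fun t => c x * s k m t + slice f x k t).
Proof.
by apply: functional_extensionality => t; rewrite /slice h_slice addrC.
Qed.

Lemma uk_add_support :
  (forall j x, Dom k j (slice f x k)) -> (forall j x, Cop Lf j f x = kappa k j x) ->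
  uk Lf s kappa k (fun y => f y + h y) = f.
Proof.
move=> fD fC; apply: functional_extensionality => x.
have rhoE j : rho Lf kappa j (fun y => f y + h y) x = - (c x * Lf k j (s k m)).
  by rewrite /rho /Cop slice_add_support Lf_linear // -/(Cop Lf j f x) fC
             opprD addrCA subrr addr0.
rewrite /uk; under eq_bigr => j _ do rewrite rhoE mulrN mulrCA.
rewrite sumrN -mulr_sumr sum_phi_Lf_s -{2}(upd_id x k) h_slice.
by rewrite addrK.
Qed.

End AddSupport.

Lemma psi_support k : (0 < ell k)%N -> exists m, psi s k = s k m.
Proof. by rewrite /psi; move: (s k); case: (ell k) => // e s_k _; exists ord0. Qed.

Lemma psi_neq0 k : exists t, psi s k t != 0.
Proof.
have [/psi_support [m ->]|] := ltnP 0 (ell k); first exact: support_neq0.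
rewrite leqn0 /psi; move: (s k); case: (ell k) => // s_k _.
by exists 0; rewrite oner_neq0.
Qed.

Lemma tensor_psi_slice k : (0 < ell k)%N ->
  exists m c, forall x t, tensor (psi s) (upd x k t) = c x * s k m t.
Proof.
move=> /psi_support [m psiE]; exists m, (fun x => \prod_(i | i != k) psi s i (x i)).
by move=> x t; rewrite tensor_upd psiE mulrC.
Qed.

Section Perturbation.
Variable f : point R n -> R.
Hypothesis f_Dom : in_domains Dom f.
Hypothesis f_constraints : satisfies_constraints Lf kappa f.

Let g := fun x => f x + tensor (psi s) x.

Lemma in_domains_perturbed : in_domains Dom g.
Proof.
move=> k j x; have ell_k : (0 < ell k)%N := leq_ltn_trans (leq0n j) (ltn_ord j).
have [m [c h_slice]] := tensor_psi_slice k ell_k.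
rewrite /g (slice_add_support _ _ f _ _ h_slice).
exact: (Dom_subspace k j).2 (s_Dom k j m) (f_Dom k j x).
Qed.

Lemma ucon_perturbed o :
  ucon Lf s kappa o g = if has (fun k => (0 < ell k)%N) o then f else g.
Proof.
elim: o => [|k o IH] //=; rewrite IH.
case: (has _ o); first by rewrite orbT uk_id.
rewrite orbF; case: ifPn => [ell_k | ].
  by have [m [c h_slice]] := tensor_psi_slice k ell_k; exact: uk_add_support.
rewrite -leqNgt leqn0 => /eqP ell_k; apply: uk_id => j.
by have := leq_trans (ltn_ord j) (eq_leq ell_k).
Qed.

Lemma free_fun_perturbed o : free_fun Lf s kappa Dom o g.
Proof.
apply: free_fun_of_ucon => o'; rewrite ucon_perturbed.
by case: ifP => _; [exact: f_Dom | exact: in_domains_perturbed].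
Qed.

Lemma perturbed_neq : f <> g.
Proof.
have [x hx] := tensor_neq0 psi_neq0.
move=> /(congr1 (fun u => u x)) /eqP; rewrite /g -subr_eq0 opprD addrA subrr add0r.
by rewrite oppr_eq0 (negbTE hx).
Qed.

End Perturbation.

End ConstrainedExpression.

Theorem theorem8 (R : realType) (n : nat)
  (ell : 'I_n -> nat)
  (Lf : forall k : 'I_n, 'I_(ell k) -> (R -> R) -> R)
  (Dom : forall k : 'I_n, 'I_(ell k) -> (R -> R) -> Prop)
  (s : forall k : 'I_n, 'I_(ell k) -> R -> R)
  (kappa : forall k : 'I_n, 'I_(ell k) -> point R n -> R)
  (ord : seq 'I_n) (f : point R n -> R) :
  perm_eq ord (enum 'I_n) ->
  (exists k, (0 < ell k)%N) ->
  (forall k j, fsubspace (Dom k j)) ->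
  (forall k j, linear_on (Dom k j) (Lf k j)) ->
  (forall k j m, Dom k j (s k m)) ->
  (forall k, support_matrix Lf s k \in unitmx) ->
  (forall k j x t, kappa k j (upd x k t) = kappa k j x) ->
  in_domains Dom f ->
  satisfies_constraints Lf kappa f ->
  exists g1 g2 : point R n -> R,
    [/\ free_fun Lf s kappa Dom ord g1, free_fun Lf s kappa Dom ord g2,
        g1 <> g2,
        ucon Lf s kappa ord g1 = f & ucon Lf s kappa ord g2 = f].
Proof.
(* The invariance of kappa in x_k is what makes u satisfy the constraints for
   every free function; both witnesses below satisfy them already. *)
move=> ord_perm [k0 ell_k0] Dsub Llin sD Sunit _ fD fC.
have ord_constrained : has (fun k => (0 < ell k)%N) ord.
  by apply/hasP; exists k0; rewrite // (perm_mem ord_perm) mem_enum.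
exists f, (fun x => f x + tensor (psi s) x); split.
- by apply: free_fun_of_ucon => o; rewrite ucon_constrained.
- exact: free_fun_perturbed.
- exact: (perturbed_neq Dsub Llin Sunit f).
- exact: ucon_constrained.
- by rewrite (ucon_perturbed Llin sD Sunit f fD fC) ord_constrained.
Qed.
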